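(* Let $n\ge1$, let $G^\star=([n],E^\star)$ be a directed graph (directed cycles allowed), and let $S_1=\operatorname{argmin}_{\mathcal S}|E^{(1)}|$, $S_2=\operatorname{argmin}_{S_1}|E^{(2)}|$, $S_3=\operatorname{argmin}_{S_2}|E^{(3)}|$, $S_4=\operatorname{argmin}_{(\mathcal P,\pi)\in S_3}|E^{(4)}_{(\mathcal P,\pi)}|$. Then (i) the partially ordered partition associated with $G^\star$ belongs to $S_4$, and (ii) for every $(\mathcal P,\pi)\in S_4$, $((a,b_1,c),(a,b_2,c))\in E^{(4)}_{(\mathcal P,\pi)}$ if and only if $(a,b_1,c)$ and $(a,b_2,c)$ are unshielded imperfect non-conductors in $G^\star$ and $b_1$ is an ancestor of $b_2$ in $G^\star$.
   Context: $[n]=\{1,\dots,n\}$. The observed distribution is Markov and faithful to $G^\star$; for distinct $a,b$ and $Z\subseteq[n]\setminus\{a,b\}$, $a\perp\!\!\!\perp b\mid Z$ means $a$ and $b$ are $d$-separated given $Z$ in $G^\star$, and $a\not\perp\!\!\!\perp b\mid Z$ is its negation. In a directed graph, $a$ is an ancestor of $b$ (and $b$ a descendant of $a$) if $a=b$ or there is a directed path from $a$ to $b$. Distinct $a,b$ are $p$-adjacent in a directed graph $G$ if there is an edge between them, or they have a common child which is an ancestor of $a$ or of $b$. A triple $(a,b,c)$ such that $a,c$ are not $p$-adjacent while $a,b$ and $c,b$ are $p$-adjacent is an unshielded conductor if $b$ is an ancestor of $a$ or of $c$, and an unshielded non-conductor otherwise; an unshielded non-conductor $(a,b,c)$ is perfect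 if $b$ is a descendant of a common child of $a$ and $c$, and imperfect otherwise. $\mathcal S$ is the set of pairs $(\mathcal P,\pi)$ with $\mathcal P$ a partition of $[n]$ and $\pi$ a partial order on $\mathcal P$; $C_1\le_\pi C_2$ iff $(C_1,C_2)\in\pi$; $C_{i,\mathcal P}$ is the block containing $i$; $C\le_\pi\max\{C_1,\dots,C_t\}$ means $C\le_\pi C_i$ for some $i$. The strongly connected components of a directed graph $G$ are the classes of $i\sim j$ iff $i=j$ or there are directed paths $i\to j$ and $j\to i$; on them $C_1\le_G C_2$ iff $C_1=C_2$ or there is a directed path from a vertex of $C_1$ to a vertex of $C_2$. The partially ordered partition associated with $G$ is (its set of strongly connected components, $\le_G$). For $(\mathcal P,\pi)\in\mathcal S$ (all sets below indexed by $(\mathcal P,\pi)$): $E^{(1)}=\{(a,b): a\ne b,\ a\not\perp\!\!\!\perp b\mid\bigcup\{C\in\mathcal P: C\le_\pi\max\{C_{a,\mathcal P},C_{b,\mathcal P}\}\}\setminus\{a,b\}\}$; $E^{(2)}$ is the set of $(a,b,c)$ distinct with $(a,b),(c,b)\in E^{(1)}$, $(a,c)\notin E^{(1)}$, $C_{b,\mathcal P}\le_\pi\max\{C_{a,\mathcal P},C_{c,\mathcal P}\}$; $E^{(3)}$ is the set of $(a,b,c)$ distinct with $(a,b),(c,b)\in E^{(1)}$, $(a,c)\notin E^{(1)}$, and $a\not\perp\!\!\!\perp c\mid\bigcup\{C\in\mathcal P: C\le_\pi\max\{C_{a,\mathcal P},C_{b,\mathcal P},C_{c,\mathcal P}\}\}\setminus\{a,c\}$;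 $E^{(4)}$ is the set of pairs $((a,b_1,c),(a,b_2,c))\in[n]^3\times[n]^3$ with $a,b_1,c$ distinct, $a,b_2,c$ distinct, $(a,b_1),(c,b_1),(a,b_2),(c,b_2)\in E^{(1)}$, $(a,c)\notin E^{(1)}$, $(a,b_1,c),(a,b_2,c)\notin E^{(2)}$, $(a,b_1,c),(a,b_2,c)\notin E^{(3)}$, and $C_{b_1,\mathcal P}\le_\pi C_{b_2,\mathcal P}$. *)

From mathcomp Require Import all_boot all_order.
From mathcomp Require Import boolp.

Set Implicit Arguments.
Unset Strict Implicit.
Unset Printing Implicit Defensive.

Section Defs.
Variable T : finType.

(* A directed graph on T is an edge relation G : rel T (G u v means u -> v).
   Ancestor: a is an ancestor of b iff connect G a b
   (a = b or there is a directed path from a to b). *)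

(* A path between a and b: a sequence of steps (d, v); a step goes from the
   previous vertex u to v through the edge u -> v if d = true, and through
   the edge v -> u if d = false.
   It is d-connecting given Z if every collider (both adjacent edges point
   into it) is an ancestor of a vertex of Z, and every non-collider is not
   in Z. *)
Definition dconn_path (G : rel T) (Z : {set T}) (a b : T)
    (s : seq (bool * T)) : Prop :=
  let vs := a :: map snd s in
  [/\ 0 < size s, last a (map snd s) = b, uniq vs,
   (forall i, i < size s ->
      if (nth (true, a) s i).1 then G (nth a vs i) (nth a vs i.+1)
      else G (nth a vs i.+1) (nth a vs i)) &
   (forall i, 0 < i < size s ->
      if (nth (true, a) s i.-1).1 && ~~ (nth (true, a) s i).1
      then exists2 z, z \in Z & connect G (nth a vs i) z
      else nth a vs i \notin Z)].

Definition dsep (G : rel T) (a b : T) (Z : {set T}) : Prop :=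
  ~ exists s, dconn_path G Z a b s.

Definition padj (G : rel T) (a b : T) : Prop :=
  a != b /\
  (G a b \/ G b a \/
   exists c, [/\ G a c, G b c & (connect G c a || connect G c b)]).

Definition unshielded (G : rel T) (a b c : T) : Prop :=
  [/\ uniq [:: a; b; c], ~ padj G a c, padj G a b & padj G c b].

Definition unshielded_conductor (G : rel T) (a b c : T) : Prop :=
  unshielded G a b c /\ (connect G b a || connect G b c).

Definition unshielded_nonconductor (G : rel T) (a b c : T) : Prop :=
  unshielded G a b c /\ ~~ (connect G b a || connect G b c).

Definition perfect_nc (G : rel T) (a b c : T) : Prop :=
  unshielded_nonconductor G a b c /\
  exists d, [/\ G a d, G c d & connect G d b].

Definition imperfect_nc (G : rel T) (a b c : T) : Prop :=
  unshielded_nonconductor G a b c /\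
  ~ exists d, [/\ G a d, G c d & connect G d b].

(* Partially ordered partitions: P a partition of T, pi a partial order on P
   given as a set of pairs (C1, C2) meaning C1 <=_pi C2. *)
Definition is_pop (P : {set {set T}}) (pi : {set {set T} * {set T}}) : Prop :=
  [/\ partition P [set: T],
      pi \subset setX P P,
      (forall C, C \in P -> (C, C) \in pi),
      (forall C1 C2, (C1, C2) \in pi -> (C2, C1) \in pi -> C1 = C2) &
      (forall C1 C2 C3, (C1, C2) \in pi -> (C2, C3) \in pi -> (C1, C3) \in pi)].

Section Sets.
Variables (G : rel T) (P : {set {set T}}) (pi : {set {set T} * {set T}}).

Local Notation blk x := (pblock P x).
Local Notation lep C1 C2 := ((C1, C2) \in pi).

Definition cond2 (a b : T) : {set T} :=
  (\bigcup_(C in P | lep C (blk a) || lep C (blk b)) C) :\: [set a; b].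

Definition cond3 (a b c : T) : {set T} :=
  (\bigcup_(C in P | [|| lep C (blk a), lep C (blk b) | lep C (blk c)]) C)
    :\: [set a; c].

Definition E1 : {set T * T} :=
  [set ab | (ab.1 != ab.2) && `[< ~ dsep G ab.1 ab.2 (cond2 ab.1 ab.2) >]].

Definition E2 : {set T * T * T} :=
  [set t | let: (a, b, c) := t in
     [&& uniq [:: a; b; c], (a, b) \in E1, (c, b) \in E1, (a, c) \notin E1
       & lep (blk b) (blk a) || lep (blk b) (blk c)]].

Definition E3 : {set T * T * T} :=
  [set t | let: (a, b, c) := t in
     [&& uniq [:: a; b; c], (a, b) \in E1, (c, b) \in E1, (a, c) \notin E1
       & `[< ~ dsep G a c (cond3 a b c) >]]].

Definition E4 : {set (T * T * T) * (T * T * T)} :=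
  [set x | let: ((a, b1, c), (a', b2, c')) := x in
     [&& a' == a, c' == c, uniq [:: a; b1; c], uniq [:: a; b2; c],
         (a, b1) \in E1, (c, b1) \in E1, (a, b2) \in E1, (c, b2) \in E1,
         (a, c) \notin E1,
         (a, b1, c) \notin E2, (a, b2, c) \notin E2,
         (a, b1, c) \notin E3, (a, b2, c) \notin E3
       & lep (blk b1) (blk b2)]].
End Sets.

Definition S1 (G : rel T) P pi : Prop :=
  is_pop P pi /\
  forall P' pi', is_pop P' pi' -> #|E1 G P pi| <= #|E1 G P' pi'|.
Definition S2 (G : rel T) P pi : Prop :=
  S1 G P pi /\
  forall P' pi', S1 G P' pi' -> #|E2 G P pi| <= #|E2 G P' pi'|.
Definition S3 (G : rel T) P pi : Prop :=
  S2 G P pi /\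
  forall P' pi', S2 G P' pi' -> #|E3 G P pi| <= #|E3 G P' pi'|.
Definition S4 (G : rel T) P pi : Prop :=
  S3 G P pi /\
  forall P' pi', S3 G P' pi' -> #|E4 G P pi| <= #|E4 G P' pi'|.

Definition scc_partition (G : rel T) : {set {set T}} :=
  [set [set j | connect G i j && connect G j i] | i : T].
Definition scc_order (G : rel T) : {set {set T} * {set T}} :=
  [set CC in setX (scc_partition G) (scc_partition G) |
     (CC.1 == CC.2) || [exists i in CC.1, exists j in CC.2, connect G i j]].

End Defs.

From mathcomp Require Import all_boot all_order.
From mathcomp Require Import boolp.

(* Three facts about d-separation drive the proof: a p-adjacent pair is
   d-connected given any set; a pair d-connected given W minus the pair, for
   an ancestral set W, is adjacent or has a common child in W; and the middle
   vertex b of a triple a - b - c of p-adjacent pairs lies in every set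
   separating a from c once b is an ancestor of a, of c, or of a vertex of that
   set.  Level by level they show that, given minimality at the previous
   levels, E1 contains the p-adjacent pairs, E2 the unshielded conductors, E3
   the perfect non-conductors and E4 the pairs of imperfect non-conductors with
   b1 an ancestor of b2, with equality for the partition into strongly
   connected components, where the sets [cond2] and [cond3] are sets of
   ancestors.  Minimising the cardinalities in turn thus forces each E_k to be
   exactly that set. *)

Set Implicit Arguments.
Unset Strict Implicit.
Unset Printing Implicit Defensive.

(** * d-connecting walks *)

Section DConnectingWalks.
Variables (T : finType) (G : rel T) (Z : {set T}).

Definition reaches (u : T) : bool := [exists z in Z, connect G u z].

(* [pd] is the direction of the step entering [u] ([None] at the start of a
   walk): [u] is a collider iff that step is forward and the next backward. *)
Definition open_at (pd : option bool) (d : bool) (u : T) : bool :=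
  if pd is Some p then (if p && ~~ d then reaches u else u \notin Z) else true.

Fixpoint dconn_walk (u : T) (pd : option bool) (s : seq (bool * T)) : Prop :=
  if s is (d, v) :: s' then
    [/\ (if d then G u v else G v u), open_at pd d u & dconn_walk v (Some d) s']
  else True.

Definition last_dir (pd : option bool) (s : seq (bool * T)) : option bool :=
  last pd [seq Some st.1 | st <- s].

Lemma last_dir_cons pd st s : last_dir pd (st :: s) = Some (last st s).1.
Proof. by elim: s st => [|st' s IH] st //=; rewrite /last_dir /= -IH. Qed.

Lemma last_dir_const pd s b : all (fun st => st.1 == b) s ->
  last_dir pd s = if s is [::] then pd else Some b.
Proof.
case: s => [|st s] // A; rewrite last_dir_cons.
by rewrite (eqP (allP A _ (mem_last _ _))).
Qed.

Lemma dconn_walk_cat u pd s1 s2 :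
  dconn_walk u pd (s1 ++ s2) <->
  dconn_walk u pd s1 /\ dconn_walk (last u (map snd s1)) (last_dir pd s1) s2.
Proof.
elim: s1 u pd => [|[d v] s1 IH] u pd /=; first by split=> // [[]].
rewrite /last_dir /= -/(last_dir _ _).
split; first by case=> e j /IH[w1 w2].
by case=> [[e j w1] w2]; split=> //; apply/IH.
Qed.

Lemma reachesP u : reflect (exists2 z, z \in Z & connect G u z) (reaches u).
Proof. exact: exists_inP. Qed.

Lemma reaches_connect u v : connect G u v -> reaches v -> reaches u.
Proof.
by move=> uv /reachesP[z zZ vz]; apply/reachesP; exists z; last exact: connect_trans uv vz.
Qed.

Lemma unreached_notin u : ~~ reaches u -> u \notin Z.
Proof. by apply: contra => uZ; apply/reachesP; exists u. Qed.

Lemma dconn_walk_enter u pd s :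
  dconn_walk u None s -> (forall d, open_at pd d u) -> dconn_walk u pd s.
Proof. by case: s => [|[d v] s] //= [e _ w] J; split. Qed.

(* Below a vertex reaching no vertex of [Z] there is no collider, so a walk
   that leaves such a vertex forward never turns back. *)
Lemma dconn_walk_forward u pd w s :
  ~~ reaches u -> dconn_walk u pd ((true, w) :: s) -> all fst s.
Proof.
elim: s u pd w => [|[d v] s IH] u pd w //= nu [uw _ [wv j w']].
have nw : ~~ reaches w by apply: contra nu; apply/reaches_connect/connect1.
case: d wv j w' => wv j w'; last by move: j; rewrite /open_at /= (negbTE nw).
exact: IH w (Some true) v nw (And3 wv j w').
Qed.

Lemma forward_walk_connect u pd s :
  all fst s -> dconn_walk u pd s -> connect G u (last u (map snd s)).
Proof.
elim: s u pd => [|[d v] s IH] u pd /=; first by rewrite connect0.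
case/andP=> -> A [e _ w].
exact: connect_trans (connect1 e) (IH _ _ A w).
Qed.

Lemma connect_forward_walk u v pd : connect G u v -> ~~ reaches u ->
  exists s, [/\ last u (map snd s) = v, dconn_walk u pd s & all fst s].
Proof.
case/connectP=> p; elim: p u pd => [|w p IH] u pd /=; first by move=> _ -> _; exists [::].
case/andP=> uw pth vE nu.
have nw : ~~ reaches w by apply: contra nu; apply/reaches_connect/connect1.
have [s [l ws A]] := IH w (Some true) pth vE nw.
exists ((true, w) :: s); split=> //=; split=> //.
by case: pd => //= p'; rewrite andbF unreached_notin.
Qed.

Lemma connect_backward_walk u v : connect G v u -> ~~ reaches v ->
  exists s, [/\ last u (map snd s) = v, dconn_walk u None s
              & all (fun st => st.1 == false) s].
Proof.
case/connectP=> p; elim: p v => [|w p IH] v /=; first by move=> _ -> _; exists [::].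
case/andP=> vw pth uE nv.
have nw : ~~ reaches w by apply: contra nv; apply/reaches_connect/connect1.
have [s [l ws A]] := IH w pth uE nw.
exists (rcons s (false, v)); split; first by rewrite map_rcons last_rcons.
  rewrite -cats1; apply/dconn_walk_cat; split=> //; rewrite l /=; split=> //.
  by rewrite (last_dir_const _ A); case: (s) => //=; rewrite unreached_notin.
by rewrite all_rcons A andbT.
Qed.

(* Through a common child [c]: [x -> c <- y] if [c] reaches [Z], otherwise
   along the directed path between [c] and [x] or [y]. *)
Lemma padj_dconn_walk x y : padj G x y ->
  exists s, [/\ 0 < size s, last x (map snd s) = y & dconn_walk x None s].
Proof.
case=> _ [e|[e|[c [xc yc cxy]]]].
- by exists [:: (true, y)].
- by exists [:: (false, y)].
have [rc|/negbTE nrc] := boolP (reaches c).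
  by exists [:: (true, c); (false, y)]; split=> //=; rewrite /open_at /= rc.
case/orP: cxy => [cx|cy].
  have [s [l ws A]] := connect_backward_walk cx (negbT nrc).
  exists (rcons s (false, y)); split; first by rewrite size_rcons.
    by rewrite map_rcons last_rcons.
  rewrite -cats1; apply/dconn_walk_cat; split=> //; rewrite l /=; split=> //.
  by rewrite (last_dir_const _ A); case: (s) => //=; rewrite unreached_notin ?nrc.
have [s [l ws A]] := connect_forward_walk (Some true) cy (negbT nrc).
by exists ((true, c) :: s); split.
Qed.

Definition walk_vtx u (s : seq (bool * T)) i := nth u (u :: map snd s) i.
Definition walk_dir u (s : seq (bool * T)) i := (nth (true, u) s i).1.

Definition walk_edges u s := forall i, i < size s ->
  if walk_dir u s i then G (walk_vtx u s i) (walk_vtx u s i.+1)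
  else G (walk_vtx u s i.+1) (walk_vtx u s i).

Definition walk_junctions u s := forall i, 0 < i < size s ->
  if walk_dir u s i.-1 && ~~ walk_dir u s i
  then exists2 z, z \in Z & connect G (walk_vtx u s i) z
  else walk_vtx u s i \notin Z.

Lemma walk_vtxS u d v s i :
  i <= size s -> walk_vtx u ((d, v) :: s) i.+1 = walk_vtx v s i.
Proof. by move=> lei; apply: set_nth_default; rewrite /= size_map ltnS. Qed.

Lemma walk_dirS u d v s i :
  i < size s -> walk_dir u ((d, v) :: s) i.+1 = walk_dir v s i.
Proof. by move=> lti; rewrite /walk_dir /= (set_nth_default (true, v)). Qed.

Lemma walk_edges_cons u d v s :
  walk_edges u ((d, v) :: s) <-> (if d then G u v else G v u) /\ walk_edges v s.
Proof.
split=> [E|[e E] [|i] lti]; last 2 first.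
- exact: e.
- by rewrite walk_dirS // !walk_vtxS //; [apply: E | apply: ltnW].
split=> [|i lti]; first exact: E 0 isT.
by have := E i.+1 lti; rewrite walk_dirS // !walk_vtxS // ltnW.
Qed.

Lemma walk_junctions_cons u d v s :
  walk_junctions u ((d, v) :: s) <->
  (if s is (d', _) :: _ then open_at (Some d) d' v else true) /\ walk_junctions v s.
Proof.
have first_junction d' v' s' : walk_dir u [:: (d, v), (d', v') & s'] 0 = d /\
    walk_dir u [:: (d, v), (d', v') & s'] 1 = d' /\
    walk_vtx u [:: (d, v), (d', v') & s'] 1 = v by [].
split=> [J|[j J] [|[|i]] // /andP[_ lti]]; last 2 first.
- case: s j J lti => [|[d' v'] s] // j _ _.
  have [-> [-> ->]] := first_junction d' v' s.
  by move: j; rewrite /open_at; case: ifP => // _ /reachesP.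
- have lti' : i.+1 < size s := lti.
  by rewrite /= !walk_dirS // ?walk_vtxS ?(ltnW lti') //; apply: J.
split=> [|[|i] // /andP[_ lti]].
  case: s J => [|[d' v'] s] // J; have := J 1 isT.
  have [-> [-> ->]] := first_junction d' v' s.
  by rewrite /open_at; case: ifP => // _ [z zZ vz]; apply/reachesP; exists z.
by have := J i.+2 lti; rewrite /= !walk_dirS // ?walk_vtxS // ltnW.
Qed.

Lemma dconn_walkE u pd s :
  dconn_walk u pd s <->
  [/\ (if s is (d, _) :: _ then open_at pd d u else true),
      walk_edges u s & walk_junctions u s].
Proof.
elim: s u pd => [|[d v] s IH] u pd /=.
  by split=> // _; split=> // i; rewrite ?ltn0 ?andbF.
split=> [[e j /IH[j' E J]]|[j /walk_edges_cons[e E] /walk_junctions_cons[j' J]]].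
  by split=> //; [apply/walk_edges_cons | apply/walk_junctions_cons].
by split=> //; apply/IH.
Qed.

Lemma dconn_pathE a b s :
  dconn_path G Z a b s <->
  [/\ 0 < size s, last a (map snd s) = b, uniq (a :: map snd s)
    & dconn_walk a None s].
Proof.
split=> [[s0 l u E J]|[s0 l u /dconn_walkE[_ E J]]]; last by [].
by split=> //; apply/dconn_walkE; split=> //; case: s {s0 l u E J} => [|[]].
Qed.

Lemma walk_loop a (s : seq (bool * T)) : ~~ uniq (a :: map snd s) ->
  exists s1 s2 s3, [/\ s = s1 ++ s2 ++ s3, 0 < size s2
    & last (last a (map snd s1)) (map snd s2) = last a (map snd s1)].
Proof.
elim: s a => [|st s IH] a //; rewrite cons_uniq negb_and negbK.
case/orP=> [/mapP[st' in_s ->]|/IH[s1 [s2 [s3 [-> s2n l]]]]].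
  case/splitPr: in_s => p1 p2.
  exists [::], (rcons p1 st'), p2.
  by rewrite cat_rcons size_rcons map_rcons last_rcons.
by exists (st :: s1), s2, s3.
Qed.

Lemma dconn_walk_drop_loop v pd s2 s3 :
  0 < size s2 -> last v (map snd s2) = v ->
  dconn_walk v pd (s2 ++ s3) -> dconn_walk v pd s3.
Proof.
case: s2 => [|[d2 x2] s2] // _ loop w23.
move/dconn_walk_cat: (w23) => [[_ j2 _]]; rewrite loop last_dir_cons.
case: s3 w23 => [|[d w] s3] // w23 [e j3 w3]; split=> //.
case: pd j2 w23 => [p1|] // j2 w23.
rewrite /open_at; case: ifP => [/andP[p1T dF]|notcol].
  apply: contraT => nv; case: d2 j2 w23 {loop j3} => j2 w23.
    have := dconn_walk_forward nv w23.
    by rewrite all_cat /= (negbTE dF) andbF.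
  by move: j2; rewrite /open_at p1T /= (negbTE nv).
move: j2 j3; rewrite /open_at.
case: ifP => [/andP[p1T _]|_ //]; case: ifP => [/andP[_ dF]|_ //].
by rewrite p1T dF in notcol.
Qed.

Lemma dconn_walk_path a b s : a != b -> last a (map snd s) = b ->
  dconn_walk a None s -> exists s', dconn_path G Z a b s'.
Proof.
move=> ab; have [m] := ubnP (size s); elim: m s => // m IH s lts l w.
have [u|/walk_loop[s1 [s2 [s3 [es s2n loop]]]]] := boolP (uniq (a :: map snd s)).
  exists s; apply/dconn_pathE; split=> //.
  by case: s {lts w u} l ab => //= <-; rewrite eqxx.
move: w l; rewrite es => /dconn_walk_cat[w1 /(dconn_walk_drop_loop s2n loop) w3].
rewrite !map_cat !last_cat loop => l.
apply: (IH (s1 ++ s3)); last 2 first.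
- by rewrite map_cat last_cat.
- exact/dconn_walk_cat.
move: lts; rewrite es !size_cat ltnS addnCA => /(leq_trans _); apply.
by rewrite -[X in X < _]add0n ltn_add2r.
Qed.

End DConnectingWalks.

(** * Separating sets *)

Section DSeparation.
Variables (T : finType) (G : rel T).

Lemma padj_sym x y : padj G x y -> padj G y x.
Proof.
case=> xy [e|[e|[c [xc yc cxy]]]]; split; rewrite 1?eq_sym //; auto.
by right; right; exists c; rewrite orbC.
Qed.

Definition ancestral (W : {set T}) :=
  forall u v, connect G u v -> v \in W -> u \in W.

Definition ancestors (A : seq T) : {set T} := [set u | has (connect G u) A].

Lemma ancestors_ancestral A : ancestral (ancestors A).
Proof.
move=> u v uv; rewrite !inE => /hasP[w wA vw].
by apply/hasP; exists w; last exact: connect_trans uv vw.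
Qed.

Lemma mem_ancestors A a : a \in A -> a \in ancestors A.
Proof. by move=> aA; rewrite inE; apply/hasP; exists a. Qed.

Section SeparatingSet.
Variable Z : {set T}.

Lemma dconn_walk_ndsep x y s : x != y -> last x (map snd s) = y ->
  dconn_walk G Z x None s -> ~ dsep G x y Z.
Proof. by move=> xy l /(dconn_walk_path xy l)[s' p]; apply; exists s'. Qed.

Lemma padj_ndsep x y : padj G x y -> ~ dsep G x y Z.
Proof.
move=> xy; have [s [_ l w]] := padj_dconn_walk Z xy.
by case: xy => xy _; apply: dconn_walk_ndsep w.
Qed.

Lemma sepset_reached_mem x b z : dsep G x z Z -> x != z ->
  padj G x b -> padj G b z -> reaches G Z b -> b \in Z.
Proof.
move=> sep xz xb bz rb; apply: contraT => nbZ; exfalso; move: sep.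
have [s1 [_ l1 w1]] := padj_dconn_walk Z xb.
have [s2 [_ l2 w2]] := padj_dconn_walk Z bz.
apply: (dconn_walk_ndsep (s := s1 ++ s2)) => //; first by rewrite map_cat last_cat l1.
apply/dconn_walk_cat; split=> //; rewrite l1; apply: dconn_walk_enter => // d.
by rewrite /open_at; case: (last_dir _ _) => // p; case: ifP.
Qed.

Lemma sepset_conductor_mem x b z : dsep G x z Z -> x != z -> x != b ->
  padj G x b -> padj G b z -> connect G b x -> b \in Z.
Proof.
move=> sep xz xb pxb bz bx; have [rb|nrb] := boolP (reaches G Z b).
  exact: sepset_reached_mem sep xz pxb bz rb.
apply: contraT => _; exfalso; move: sep.
have [s1 [l1 w1 A]] := connect_backward_walk bx nrb.
have [s2 [_ l2 w2]] := padj_dconn_walk Z bz.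
apply: (dconn_walk_ndsep (s := s1 ++ s2)) => //; first by rewrite map_cat last_cat l1.
apply/dconn_walk_cat; split=> //; rewrite l1; apply: dconn_walk_enter => // d.
rewrite (last_dir_const _ A); case: s1 l1 {w1 A} => [/= bxE|st s1 _].
  by rewrite bxE eqxx in xb.
by rewrite /open_at /= (unreached_notin nrb).
Qed.

(* The first inner vertex of a d-connecting path lies in [W], hence is a
   collider; its successor then lies in [W] too, so it cannot be an inner
   non-collider and must be [y]. *)
Lemma dconn_path_ancestral W x y s : ancestral W -> x \in W -> y \in W ->
  dconn_path G (W :\: [set x; y]) x y s ->
  [\/ G x y, G y x | exists d, [/\ G x d, G y d & d \in W]].
Proof.
move=> anc xW yW /dconn_pathE[s0 l u w]; set Z' := W :\: [set x; y] in w.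
have reachedW v : reaches G Z' v -> v \in W.
  by case/reachesP=> z; rewrite inE => /andP[_ zW] vz; apply: anc vz zW.
have inZ' v : v \in W -> v != x -> v != y -> v \in Z'.
  by move=> vW vx vy; rewrite !inE negb_or vx vy.
case: s s0 l u w => [|[d1 v1] s] // _ /= l u [e1 _ w].
case: s l u w => [|[d2 v2] s] /= l u.
  by move=> _; rewrite -l; case: d1 e1 {u} => e1; [apply: Or31 | apply: Or32].
case=> e2 j2 w; move: u => /and3P[xn v1n u].
have xv1 : v1 != x by apply: contraNneq xn => ->; rewrite mem_head.
have yv1 : v1 != y by apply: contraNneq v1n => ->; rewrite -l mem_last.
have v1W : v1 \in W.
  case: d1 e1 j2 {v1n u} => e1 j2; last exact: anc (connect1 e1) xW.
  have [/reachedW //|nr] := boolP (reaches G Z' v1).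
  case: d2 e2 j2 w => e2 j2 w; last by move: j2; rewrite /open_at /= (negbTE nr).
  have w' : dconn_walk G Z' v1 (Some true) ((true, v2) :: s) by [].
  apply: anc yW; rewrite -l.
  by apply: (forward_walk_connect _ w'); rewrite /= (dconn_walk_forward nr w').
move: j2; rewrite /open_at inZ' //.
case: d1 d2 e1 e2 w => [] [] //= e1 e2 w _.
have v2W := anc _ _ (connect1 e2) v1W.
case: s l w u xn {v1n} => [|[d3 v3] s] /= l.
  by move=> _ _ _; apply: Or33; exists v1; rewrite -l.
case=> _ j3 _ /andP[v2n _] xn; move: j3; rewrite /open_at /= inZ' //.
  by apply: contraNneq xn => <-; rewrite !inE eqxx orbT.
by apply: contraNneq v2n => ->; rewrite -l mem_last.
Qed.

End SeparatingSet.
End DSeparation.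

(** * Partially ordered partitions *)

Section BlockOrder.
Variables (T : finType) (P : {set {set T}}) (pi : {set {set T} * {set T}}).
Hypothesis partP : partition P [set: T].

Lemma mem_bigcup_pblock (f : {set T} -> bool) u :
  (u \in \bigcup_(C in P | f C) C) = f (pblock P u).
Proof.
case/and3P: partP => /eqP cov triv _.
have uP : u \in cover P by rewrite cov inE.
apply/bigcupP/idP => [[C /andP[CP fC] uC]|fu].
  by rewrite (def_pblock triv CP uC).
by exists (pblock P u); rewrite ?pblock_mem ?fu ?mem_pblock.
Qed.

Definition block_le u v := (pblock P u, pblock P v) \in pi.

Lemma mem_cond2 a b u :
  (u \in cond2 P pi a b) = (u \notin [set a; b]) && (block_le u a || block_le u b).
Proof. by rewrite in_setD (mem_bigcup_pblock (fun C => _ || _)). Qed.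

Lemma mem_cond3 a b c u :
  (u \in cond3 P pi a b c) =
  (u \notin [set a; c]) && [|| block_le u a, block_le u b | block_le u c].
Proof. by rewrite in_setD (mem_bigcup_pblock (fun C => [|| _, _ | _])). Qed.

End BlockOrder.

Lemma block_le_refl (T : finType) P pi (u : T) : is_pop P pi -> block_le P pi u u.
Proof.
case=> partP _ refl _ _; apply/refl/pblock_mem.
by case/and3P: partP => /eqP -> _ _; rewrite inE.
Qed.

Section StronglyConnectedComponents.
Variables (T : finType) (G : rel T).

Local Notation sP := (scc_partition G).
Local Notation sO := (scc_order G).

Definition scc x := [set y | connect G x y && connect G y x].

Lemma scc_refl x : x \in scc x.
Proof. by rewrite inE connect0. Qed.

Lemma scc_eq x y : y \in scc x -> scc y = scc x.
Proof.
rewrite inE => /andP[xy yx]; apply/setP => z; rewrite !inE.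
by apply/andP/andP=> [[yz zy]|[xz zx]]; split; apply: connect_trans;
  eassumption.
Qed.

Lemma scc_mem_partition x : scc x \in sP.
Proof. exact: imset_f. Qed.

Lemma mem_scc_partitionP C : reflect (exists x, C = scc x) (C \in sP).
Proof.
by apply: (iffP imsetP) => [[x _ ->]|[x ->]]; exists x.
Qed.

Lemma scc_partitionP : partition sP [set: T].
Proof.
apply/and3P; split.
- apply/eqP/setP => x; rewrite inE; apply/bigcupP.
  by exists (scc x); [apply: scc_mem_partition | apply: scc_refl].
- apply/trivIsetP => _ _ /mem_scc_partitionP[i ->] /mem_scc_partitionP[j ->] ij.
  apply/pred0P => z /=; apply/negP => /andP[zi zj].
  by rewrite -(scc_eq zi) -(scc_eq zj) eqxx in ij.
- by apply/mem_scc_partitionP => -[i /setP/(_ i)]; rewrite scc_refl inE.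
Qed.

Lemma pblock_scc x : pblock sP x = scc x.
Proof.
case/and3P: scc_partitionP => _ triv _.
exact: def_pblock triv (scc_mem_partition x) (scc_refl x).
Qed.

Lemma scc_order_le x y : ((scc x, scc y) \in sO) = connect G x y.
Proof.
rewrite inE /= in_setX !scc_mem_partition /=.
apply/orP/idP => [[/eqP sxy|/existsP[i /andP[xi /existsP[j /andP[jy ij]]]]]|xy].
- by have := scc_refl y; rewrite -sxy inE => /andP[].
- move: xi jy; rewrite !inE => /andP[xi _] /andP[_ jy].
  exact: connect_trans xi (connect_trans ij jy).
- by right; apply/existsP; exists x; rewrite scc_refl; apply/existsP; exists y;
    rewrite scc_refl.
Qed.

Lemma block_le_scc x y : block_le sP sO x y = connect G x y.
Proof. by rewrite /block_le !pblock_scc scc_order_le. Qed.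

Lemma scc_orderP C1 C2 : (C1, C2) \in sO ->
  exists x y, [/\ C1 = scc x, C2 = scc y & connect G x y].
Proof.
move=> le; move: (le); rewrite inE in_setX => /andP[/andP[]].
move=> /mem_scc_partitionP[x E1] /mem_scc_partitionP[y E2] _.
by exists x, y; split=> //; rewrite -scc_order_le -E1 -E2.
Qed.

Lemma scc_pop : is_pop sP sO.
Proof.
split.
- exact: scc_partitionP.
- by apply/subsetP => CC; rewrite inE => /andP[].
- by move=> _ /mem_scc_partitionP[x ->]; rewrite scc_order_le connect0.
- move=> _ _ /scc_orderP[x [y [-> -> xy]]]; rewrite scc_order_le => yx.
  by apply/esym/scc_eq; rewrite inE xy yx.
- move=> _ _ C3 /scc_orderP[x [y [-> -> xy]]] /[dup] /scc_orderP[_ [z [_ -> _]]].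
  by rewrite !scc_order_le; apply: connect_trans.
Qed.

End StronglyConnectedComponents.

(** * The successive argmins *)

Section Argmin.
Variables (A B : Type) (U : finType).
Variables (S : A -> B -> Prop) (E : A -> B -> {set U}) (X : {set U}).
Hypothesis X_sub : forall a b, S a b -> X \subset E a b.

Lemma argmin_card a0 b0 : E a0 b0 \subset X ->
  forall a b, S a b -> #|E a0 b0| <= #|E a b|.
Proof.
by move=> E0 a b Sab; apply: leq_trans (subset_leq_card E0) (subset_leq_card (X_sub Sab)).
Qed.

Lemma argmin_eq a0 b0 : S a0 b0 -> E a0 b0 \subset X ->
  forall a b, S a b /\ (forall a' b', S a' b' -> #|E a b| <= #|E a' b'|) ->
  E a b = X.
Proof.
move=> S0 E0 a b [Sab min]; apply/eqP; rewrite eq_sym eqEcard X_sub //=.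
exact: leq_trans (min _ _ S0) (subset_leq_card E0).
Qed.

End Argmin.

Lemma uniq3 (T : eqType) (a b c : T) :
  uniq [:: a; b; c] -> [/\ a != b, a != c & b != c].
Proof. by rewrite /= !inE negb_or => /andP[/andP[-> ->] /andP[-> _]]. Qed.

Section Identification.
Variables (T : finType) (G : rel T).

Local Notation sP := (scc_partition G).
Local Notation sO := (scc_order G).

Definition padj_pairs : {set T * T} := [set ab | `[< padj G ab.1 ab.2 >]].

Definition unshielded_conductors : {set T * T * T} :=
  [set t | let: (a, b, c) := t in `[< unshielded_conductor G a b c >]].

Definition perfect_ncs : {set T * T * T} :=
  [set t | let: (a, b, c) := t in `[< perfect_nc G a b c >]].

Definition imperfect_nc_pairs : {set (T * T * T) * (T * T * T)} :=
  [set x | let: ((a, b1, c), (a', b2, c')) := x in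
     [&& a' == a, c' == c, `[< imperfect_nc G a b1 c >],
         `[< imperfect_nc G a b2 c >] & connect G b1 b2]].

Lemma mem_padj_pairs x y : ((x, y) \in padj_pairs) = `[< padj G x y >].
Proof. by rewrite inE. Qed.

Lemma imperfect_nc_pairsP a b1 c a' b2 c' :
  reflect [/\ a' = a, c' = c, imperfect_nc G a b1 c, imperfect_nc G a b2 c
            & connect G b1 b2]
          (((a, b1, c), (a', b2, c')) \in imperfect_nc_pairs).
Proof.
rewrite inE; apply: (iffP and5P) => [[/eqP-> /eqP-> /asboolP i1 /asboolP i2 b12] //|].
by case=> -> -> i1 i2 b12; rewrite !eqxx; split=> //; apply/asboolP.
Qed.

Lemma cond2_scc a b : cond2 sP sO a b = ancestors G [:: a; b] :\: [set a; b].
Proof.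
by apply/setP => u; rewrite mem_cond2 ?scc_partitionP // !block_le_scc !inE /= orbF.
Qed.

Lemma cond3_scc a b c :
  cond3 sP sO a b c = ancestors G [:: a; b; c] :\: [set a; c].
Proof.
by apply/setP => u; rewrite mem_cond3 ?scc_partitionP // !block_le_scc !inE /= orbF.
Qed.

Lemma padj_pairs_sub_E1 P pi : padj_pairs \subset E1 G P pi.
Proof.
apply/subsetP => -[a b]; rewrite !inE /= => /asboolP ab.
by case: (ab) => -> _; apply/asboolP; apply: padj_ndsep.
Qed.

Lemma E1_scc_sub : E1 G sP sO \subset padj_pairs.
Proof.
apply/subsetP => -[a b]; rewrite !inE /= cond2_scc.
case/andP=> ab /asboolP/contrapT[s p]; apply/asboolP; split=> //.
have aW : a \in ancestors G [:: a; b] by apply: mem_ancestors; rewrite mem_head.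
have bW : b \in ancestors G [:: a; b] by apply: mem_ancestors; rewrite !inE eqxx orbT.
case: (dconn_path_ancestral (@ancestors_ancestral _ G _) aW bW p) => [e|e|]; auto.
by case=> d [ad bd]; rewrite inE /= orbF => da; right; right; exists d.
Qed.

Lemma S1_scc : S1 G sP sO.
Proof.
split; first exact: scc_pop.
by move=> P pi; apply: (argmin_card _ E1_scc_sub) => P' pi' _; apply: padj_pairs_sub_E1.
Qed.

Lemma S1_E1 P pi : S1 G P pi -> E1 G P pi = padj_pairs.
Proof.
by apply: (argmin_eq _ (scc_pop G) E1_scc_sub) => P' pi' _; apply: padj_pairs_sub_E1.
Qed.

Lemma E1_unshielded P pi a b c : E1 G P pi = padj_pairs ->
  uniq [:: a; b; c] && ((a, b) \in E1 G P pi) && ((c, b) \in E1 G P pi)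
    && ((a, c) \notin E1 G P pi) = `[< unshielded G a b c >].
Proof.
move=> ->; rewrite !mem_padj_pairs; apply/idP/asboolP.
  by case/andP=> /andP[/andP[u /asboolP ab] /asboolP cb] /asboolP nac.
by case=> u nac ab cb; rewrite u (asboolT ab) (asboolT cb) (asboolF nac).
Qed.

Lemma mem_E2_padj P pi a b c : E1 G P pi = padj_pairs ->
  ((a, b, c) \in E2 G P pi) =
  `[< unshielded G a b c >] && (block_le P pi b a || block_le P pi b c).
Proof. by move=> E; rewrite inE !andbA E1_unshielded. Qed.

Lemma mem_E3_padj P pi a b c : E1 G P pi = padj_pairs ->
  ((a, b, c) \in E3 G P pi) =
  `[< unshielded G a b c >] && `[< ~ dsep G a c (cond3 P pi a b c) >].
Proof. by move=> E; rewrite inE !andbA E1_unshielded. Qed.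

Lemma E1_padj_dsep P pi a c : E1 G P pi = padj_pairs -> a != c ->
  ~ padj G a c -> dsep G a c (cond2 P pi a c).
Proof.
move=> E ac npac; have : (a, c) \notin E1 G P pi by rewrite E inE; apply/asboolPn.
by rewrite inE /= ac => /asboolPn/contrapT.
Qed.

Lemma conductor_block_le P pi a b c : S1 G P pi ->
  unshielded_conductor G a b c -> block_le P pi b a || block_le P pi b c.
Proof.
move=> h [[u npac pab pcb] bac]; have E := S1_E1 h.
have [[partP _ _ _ _] _] := h; have [ab ac bc] := uniq3 u.
have key x z : x != z -> x != b -> ~ padj G x z -> padj G x b -> padj G z b ->
    connect G b x -> block_le P pi b x || block_le P pi b z.
  move=> xz xb npxz pxb pzb bx.
  have := sepset_conductor_mem (E1_padj_dsep E xz npxz) xz xb pxb (padj_sym pzb) bx.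
  by rewrite mem_cond2 // => /andP[].
case/orP: bac => [ba|bc']; first exact: key.
rewrite orbC; apply: key; rewrite 1?eq_sym //.
by move/padj_sym.
Qed.

Lemma conductors_sub_E2 P pi : S1 G P pi -> unshielded_conductors \subset E2 G P pi.
Proof.
move=> h; apply/subsetP => -[[a b] c]; rewrite inE => /asboolP cd.
by rewrite mem_E2_padj ?(S1_E1 h) // (asboolT cd.1) conductor_block_le.
Qed.

Lemma E2_scc_sub : E2 G sP sO \subset unshielded_conductors.
Proof.
apply/subsetP => -[[a b] c]; rewrite mem_E2_padj ?(S1_E1 S1_scc) // !block_le_scc.
by case/andP=> /asboolP un bac; rewrite inE; apply/asboolP.
Qed.

Lemma S2_scc : S2 G sP sO.
Proof.
split; first exact: S1_scc.
by move=> P pi; apply: (argmin_card conductors_sub_E2 E2_scc_sub).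
Qed.

Lemma S2_E2 P pi : S2 G P pi -> E2 G P pi = unshielded_conductors.
Proof. exact: (argmin_eq conductors_sub_E2 S1_scc E2_scc_sub). Qed.

Lemma perfect_ncs_sub_E3 P pi : S1 G P pi -> perfect_ncs \subset E3 G P pi.
Proof.
move=> h; have [pop _] := h; have [partP _ _ _ _] := pop.
apply/subsetP => -[[a b] c]; rewrite inE => /asboolP[[un _] [d [ad cd db]]].
rewrite mem_E3_padj ?(S1_E1 h) // (asboolT un) /=; apply/asboolP.
case: (un) => /uniq3[ab ac bc] _ _ _.
apply: (dconn_walk_ndsep (s := [:: (true, d); (false, c)])) => //.
split=> //; split=> //; apply/reachesP; exists b => //.
by rewrite mem_cond3 // !inE negb_or eq_sym ab bc block_le_refl ?orbT.
Qed.

Lemma E3_scc_sub : E3 G sP sO \subset perfect_ncs.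
Proof.
apply/subsetP => -[[a b] c]; rewrite mem_E3_padj ?(S1_E1 S1_scc) // cond3_scc.
case/andP=> /asboolP un /asboolP/contrapT[s p].
case: (un) => /uniq3[ab ac bc] npac _ _.
have aW : a \in ancestors G [:: a; b; c] by apply: mem_ancestors; rewrite mem_head.
have cW : c \in ancestors G [:: a; b; c] by apply: mem_ancestors; rewrite !inE eqxx !orbT.
case: (dconn_path_ancestral (@ancestors_ancestral _ G _) aW cW p) => [e|e|].
- by case: npac; split=> //; left.
- by case: npac; split=> //; right; left.
case=> d [ad cd]; rewrite inE /= orbF => dabc.
have ndac : ~~ (connect G d a || connect G d c).
  by apply/negP => dac; apply: npac; split=> //; right; right; exists d.
have db : connect G d b.
  by move: dabc ndac; case: (connect G d b); rewrite ?orbF // => ->.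
rewrite inE; apply/asboolP; split; last by exists d.
split=> //; apply: contra ndac => /orP[ba|bc'].
  by rewrite (connect_trans db ba).
by rewrite (connect_trans db bc') orbT.
Qed.

Lemma S3_scc : S3 G sP sO.
Proof.
split; first exact: S2_scc.
move=> P pi; apply: (argmin_card _ E3_scc_sub) => P' pi' h.
exact: perfect_ncs_sub_E3 h.1.
Qed.

Lemma S3_E3 P pi : S3 G P pi -> E3 G P pi = perfect_ncs.
Proof.
apply: (argmin_eq _ S2_scc E3_scc_sub) => P' pi' h.
exact: perfect_ncs_sub_E3 h.1.
Qed.


Lemma imperfect_ncI a b c : unshielded G a b c ->
  (a, b, c) \notin unshielded_conductors -> (a, b, c) \notin perfect_ncs ->
  imperfect_nc G a b c.
Proof.
rewrite !inE => un /asboolPn nco /asboolPn nperf.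
have unc : unshielded_nonconductor G a b c by split=> //; apply/negP => bac; apply: nco.
by split=> // perf; apply: nperf.
Qed.

Lemma imperfect_ncE a b c : imperfect_nc G a b c ->
  [/\ unshielded G a b c, (a, b, c) \notin unshielded_conductors
    & (a, b, c) \notin perfect_ncs].
Proof.
case=> -[un nc] nperf; rewrite !inE; split=> //; apply/asboolPn.
  by case=> _ bac; rewrite bac in nc.
by case.
Qed.

(* [b2] is in [cond3 a b2 c], which separates [a] and [c]; so its ancestor
   [b1], a junction between [a] and [c], must be in it too. *)
Lemma imperfect_block_le P pi a b1 c b2 : S3 G P pi ->
  imperfect_nc G a b1 c -> imperfect_nc G a b2 c -> connect G b1 b2 ->
  block_le P pi b1 b2.
Proof.
move=> h3 i1 i2 b12; have [h2 _] := h3; have [h1 _] := h2.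
have [pop _] := h1; have [partP _ _ _ _] := pop; have E := S1_E1 h1.
have [un1 nco1 _] := imperfect_ncE i1; have [un2 _ nperf2] := imperfect_ncE i2.
move: nco1; rewrite -(S2_E2 h2) mem_E2_padj // (asboolT un1) negb_or => /andP[nb1a nb1c].
move: nperf2; rewrite -(S3_E3 h3) mem_E3_padj // (asboolT un2) => /asboolPn/contrapT sep.
case: un1 => /uniq3[_ ac _] _ pab1 pcb1; case: un2 => /uniq3[ab2 _ b2c] _ _ _.
have rb1 : reaches G (cond3 P pi a b2 c) b1.
  apply/reachesP; exists b2 => //.
  by rewrite mem_cond3 // !inE negb_or eq_sym ab2 b2c block_le_refl ?orbT.
have := sepset_reached_mem sep ac pab1 (padj_sym pcb1) rb1.
by rewrite mem_cond3 // (negbTE nb1a) (negbTE nb1c) orbF => /andP[].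
Qed.

Lemma E4P P pi a b1 c a' b2 c' : S3 G P pi ->
  reflect [/\ a' = a, c' = c, imperfect_nc G a b1 c, imperfect_nc G a b2 c
            & block_le P pi b1 b2]
          (((a, b1, c), (a', b2, c')) \in E4 G P pi).
Proof.
move=> h3; have [h2 _] := h3; have [h1 _] := h2; have E := S1_E1 h1.
rewrite inE (S2_E2 h2) (S3_E3 h3); apply: (iffP idP) => [|[-> -> i1 i2 le]].
  case/and5P=> /eqP-> /eqP-> u1 u2.
  case/and5P=> ab1 cb1 ab2 cb2 /and5P[nac n21 n22 n31 /andP[n32 le]].
  by split=> //; apply: imperfect_ncI => //; apply/asboolP;
    rewrite -(E1_unshielded _ _ _ E) ?u1 ?u2 ?ab1 ?cb1 ?ab2 ?cb2 nac.
have [+ n21 n31] := imperfect_ncE i1; have [+ n22 n32] := imperfect_ncE i2.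
move=> /asboolP; rewrite -(E1_unshielded _ _ _ E) => /andP[/andP[/andP[u2 ab2] cb2] _].
move=> /asboolP; rewrite -(E1_unshielded _ _ _ E) => /andP[/andP[/andP[u1 ab1] cb1] nac].
by rewrite !eqxx u1 u2 ab1 cb1 ab2 cb2 nac n21 n22 n31 n32.
Qed.

Lemma imperfect_nc_pairs_sub_E4 P pi : S3 G P pi -> imperfect_nc_pairs \subset E4 G P pi.
Proof.
move=> h3; apply/subsetP => -[[[a b1] c] [[a' b2] c']].
case/imperfect_nc_pairsP=> -> -> i1 i2 b12.
by apply/(E4P _ _ _ _ _ _ h3); split=> //; apply: imperfect_block_le h3 i1 i2 b12.
Qed.

Lemma E4_scc_sub : E4 G sP sO \subset imperfect_nc_pairs.
Proof.
apply/subsetP => -[[[a b1] c] [[a' b2] c']].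
case/(E4P _ _ _ _ _ _ S3_scc)=> -> -> i1 i2; rewrite block_le_scc => b12.
exact/imperfect_nc_pairsP.
Qed.

Lemma S4_scc : S4 G sP sO.
Proof.
split; first exact: S3_scc.
by move=> P pi; apply: (argmin_card imperfect_nc_pairs_sub_E4 E4_scc_sub).
Qed.

Lemma S4_E4 P pi : S4 G P pi -> E4 G P pi = imperfect_nc_pairs.
Proof. exact: (argmin_eq imperfect_nc_pairs_sub_E4 S3_scc E4_scc_sub). Qed.

End Identification.

Theorem proposition3p11 (n : nat) (Gs : rel 'I_n) :
  0 < n -> irreflexive Gs ->
  S4 Gs (scc_partition Gs) (scc_order Gs) /\
  (forall (P : {set {set 'I_n}}) (pi : {set {set 'I_n} * {set 'I_n}}),
     S4 Gs P pi ->
     forall a b1 c b2 : 'I_n,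
       ((a, b1, c), (a, b2, c)) \in E4 Gs P pi <->
       [/\ imperfect_nc Gs a b1 c, imperfect_nc Gs a b2 c & connect Gs b1 b2]).
Proof.
move=> _ _; split; first exact: S4_scc.
move=> P pi h a b1 c b2; rewrite (S4_E4 h).
by split=> [/imperfect_nc_pairsP[]|[i1 i2 b12]]; last apply/imperfect_nc_pairsP.
Qed.
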